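(* There exists a $\Gamma_2$-equivariant continuous map $f:S(U'_1\oplus U'_1)\to S(U'_2\oplus V'_1)$.
   Context: $\Gamma_2=S^1\rtimes C_2\cong \mathrm{O}(2)$, where $C_2=\langle a\rangle$ and $a t a^{-1}=t^{-1}$ for $t\in S^1$. For $k\in\mathbb{Z}$, $U'_k$ is the real $2$-dimensional orthogonal $\Gamma_2$-representation on $\mathbb{C}\cong\mathbb{R}^2$ with $t\cdot z=t^kz$ for $t\in S^1$ and $a\cdot z=\bar z$. $V'_1$ is the $1$-dimensional real representation on which $S^1$ acts trivially and $a$ acts by $x\mapsto -x$. $S(\cdot)$ denotes the unit sphere. *)

From Stdlib Require Import Reals ZArith.
From Coquelicot Require Import Coquelicot.
Open Scope R_scope.

Definition Cpowz (t : C) (k : Z) : C :=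
  match k with
  | Z0 => 1%C
  | Zpos p => Cpow t (Pos.to_nat p)
  | Zneg p => Cinv (Cpow t (Pos.to_nat p))
  end.

(* Gamma_2 = S^1 ⋊ C_2 ≅ O(2): an element is t * a^b with |t| = 1, b : bool
   (b = true means the reflection a is present, element t a). *)
Definition Gamma2 : Type := (C * bool)%type.
Definition in_Gamma2 (g : Gamma2) : Prop := Cmod (fst g) = 1.

(* Action of g = t a^b on U'_k (= C): t a^b . z = t^k * (a^b . z), a.z = conj z. *)
Definition actU (k : Z) (g : Gamma2) (z : C) : C :=
  Cmult (Cpowz (fst g) k) (if snd g then Cconj z else z).

(* Action on V'_1 (= R): S^1 trivial, a acts by -1. *)
Definition actV1 (g : Gamma2) (x : R) : R := if snd g then - x else x.

Definition act_U1U1 (g : Gamma2) (v : C * C) : C * C :=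
  (actU 1 g (fst v), actU 1 g (snd v)).
Definition act_U2V1 (g : Gamma2) (w : C * R) : C * R :=
  (actU 2 g (fst w), actV1 g (snd w)).

Definition S_U1U1 (v : C * C) : Prop := (Cmod (fst v))^2 + (Cmod (snd v))^2 = 1.
Definition S_U2V1 (w : C * R) : Prop := (Cmod (fst w))^2 + (snd w)^2 = 1.

From Stdlib Require Import Reals ZArith.
From Coquelicot Require Import Coquelicot.
Open Scope R_scope.

(* The required map is the quadratic "folding" map
       F (z, w) = (z^2 + w^2, 2 Im (z * conj w))   from  C^2  to  C x R.
   1. Sphere: the Lagrange-type identity
          |z^2 + w^2|^2 + (2 Im (z conj w))^2 = (|z|^2 + |w|^2)^2
      shows that F maps the unit sphere of U'_1 + U'_1 to that of U'_2 + V'_1.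
   2. Equivariance: a rotation t in S^1 multiplies z and w by t, so z^2 + w^2
      is multiplied by t^2 while z conj w is multiplied by |t|^2 = 1; the
      reflection a conjugates z and w, which conjugates z^2 + w^2 and changes
      the sign of Im (z conj w).  These are exactly the actions on U'_2 and V'_1.
   3. Continuity: F is polynomial in the real coordinates; we develop a small
      compositional toolkit for continuity of complex-valued maps
      (via real and imaginary parts) and restrict to the sphere at the end. *)

Section ComplexContinuity.

Context {U : UniformSpace}.

Lemma continuous_pair {V W : UniformSpace} (f : U -> V) (g : U -> W) (x : U) :
  continuous f x -> continuous g x -> continuous (fun y => (f y, g y)) x.
Proof.
  intros Hf Hg.
  apply (continuous_comp_2 f g pair x Hf Hg).
  apply (continuous_ext (fun p : V * W => p)); [now intros [] | apply continuous_id].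
Qed.

Lemma continuous_fst_comp {V W : UniformSpace} (f : U -> V * W) (x : U) :
  continuous f x -> continuous (fun y => fst (f y)) x.
Proof.
  intros Hf; apply (continuous_comp f fst); [exact Hf|].
  destruct (f x); apply continuous_fst.
Qed.

Lemma continuous_snd_comp {V W : UniformSpace} (f : U -> V * W) (x : U) :
  continuous f x -> continuous (fun y => snd (f y)) x.
Proof.
  intros Hf; apply (continuous_comp f snd); [exact Hf|].
  destruct (f x); apply continuous_snd.
Qed.

Variable x : U.

Lemma continuous_Re_comp (f : U -> C) :
  continuous f x -> continuous (fun y => Re (f y)) x.
Proof. exact (continuous_fst_comp f x). Qed.

Lemma continuous_Im_comp (f : U -> C) :
  continuous f x -> continuous (fun y => Im (f y)) x.
Proof. exact (continuous_snd_comp f x). Qed.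

Lemma continuous_Rplus_comp (u v : U -> R) :
  continuous u x -> continuous v x -> continuous (fun y => u y + v y) x.
Proof. intros; now apply (@continuous_plus U R_AbsRing R_NormedModule). Qed.

Lemma continuous_Rmult_comp (u v : U -> R) :
  continuous u x -> continuous v x -> continuous (fun y => u y * v y) x.
Proof. intros; now apply (@continuous_mult U R_AbsRing). Qed.

Lemma continuous_Ropp_comp (u : U -> R) :
  continuous u x -> continuous (fun y => - u y) x.
Proof. intros; now apply (@continuous_opp U R_AbsRing R_NormedModule). Qed.

Lemma continuous_C_of_parts (h : U -> C) :
  continuous (fun y => Re (h y)) x -> continuous (fun y => Im (h y)) x ->
  continuous h x.
Proof.
  intros Hre Him.
  apply (continuous_ext (fun y => (Re (h y), Im (h y)))); [now intros y; destruct (h y)|].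
  now apply continuous_pair.
Qed.

Section Operations.

Variables f g : U -> C.
Hypotheses (Hf : continuous f x) (Hg : continuous g x).

Let Ref := continuous_Re_comp f Hf.
Let Imf := continuous_Im_comp f Hf.
Let Reg := continuous_Re_comp g Hg.
Let Img := continuous_Im_comp g Hg.

Lemma continuous_Cplus_comp : continuous (fun y => Cplus (f y) (g y)) x.
Proof. apply continuous_C_of_parts; simpl; now apply continuous_Rplus_comp. Qed.

Lemma continuous_Cmult_comp : continuous (fun y => Cmult (f y) (g y)) x.
Proof.
  apply continuous_C_of_parts; simpl.
  - apply continuous_Rplus_comp; [|apply continuous_Ropp_comp];
      now apply continuous_Rmult_comp.
  - now apply continuous_Rplus_comp; apply continuous_Rmult_comp.
Qed.

Lemma continuous_Cconj_comp : continuous (fun y => Cconj (f y)) x.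
Proof. apply continuous_C_of_parts; simpl; [|apply continuous_Ropp_comp]; assumption. Qed.

End Operations.

End ComplexContinuity.

Definition fold_map (v : C * C) : C * R :=
  ((fst v * fst v + snd v * snd v)%C, 2 * Im (fst v * Cconj (snd v))%C).

Lemma fold_map_norm (z w : C) :
  Cmod (z * z + w * w)%C ^ 2 + (2 * Im (z * Cconj w)%C) ^ 2
  = (Cmod z ^ 2 + Cmod w ^ 2) ^ 2.
Proof.
  rewrite !Cmod2_alt. destruct z as [a b], w as [c d]; simpl; ring.
Qed.

Lemma fold_map_sphere (v : C * C) : S_U1U1 v -> S_U2V1 (fold_map v).
Proof.
  unfold S_U1U1, S_U2V1, fold_map; cbn [fst snd]; intros Hv.
  now rewrite fold_map_norm, Hv, pow1.
Qed.

Lemma Cmult_conj_unit (t : C) : Cmod t = 1 -> (t * Cconj t)%C = 1%C.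
Proof. intros Ht; now rewrite <- Cmod2_conj, Ht, pow1. Qed.

Lemma fold_map_rotate (t z w : C) : Cmod t = 1 ->
  fold_map ((t * z)%C, (t * w)%C)
  = ((t * t * fst (fold_map (z, w)))%C, snd (fold_map (z, w))).
Proof.
  intros Ht; unfold fold_map; cbn [fst snd].
  replace (t * z * Cconj (t * w))%C with ((t * Cconj t) * (z * Cconj w))%C
    by (rewrite Cmult_conj; ring).
  rewrite Cmult_conj_unit, Cmult_1_l by exact Ht.
  f_equal; ring.
Qed.

Lemma fold_map_conj (z w : C) :
  fold_map (Cconj z, Cconj w)
  = (Cconj (fst (fold_map (z, w))), - snd (fold_map (z, w))).
Proof.
  destruct z as [a b], w as [c d].
  unfold fold_map, Cconj, Cmult, Cplus; simpl; f_equal; [f_equal|]; ring.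
Qed.

Lemma Cpowz_1 (t : C) : Cpowz t 1 = t.
Proof. exact (Cpow_1_r t). Qed.

Lemma Cpowz_2 (t : C) : Cpowz t 2 = (t * t)%C.
Proof. simpl; ring. Qed.

Lemma fold_map_equivariant (g : Gamma2) (v : C * C) :
  in_Gamma2 g -> fold_map (act_U1U1 g v) = act_U2V1 g (fold_map v).
Proof.
  destruct g as [t b], v as [z w]; unfold in_Gamma2; cbn [fst snd]; intros Ht.
  unfold act_U1U1, act_U2V1, actU, actV1; cbn [fst snd].
  rewrite Cpowz_1, Cpowz_2, fold_map_rotate by exact Ht.
  destruct b; [rewrite fold_map_conj|]; reflexivity.
Qed.

Lemma fold_map_continuous (v : C * C) : continuous fold_map v.
Proof.
  assert (Hz : continuous (fun u : C * C => fst u) v)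
    by (apply continuous_fst_comp, continuous_id).
  assert (Hw : continuous (fun u : C * C => snd u) v)
    by (apply continuous_snd_comp, continuous_id).
  apply continuous_pair.
  - apply continuous_Cplus_comp; now apply continuous_Cmult_comp.
  - apply continuous_Rmult_comp; [apply continuous_const|].
    apply continuous_Im_comp, continuous_Cmult_comp; [|apply continuous_Cconj_comp]; assumption.
Qed.

Theorem lemma3p3 :
  exists f : C * C -> C * R,
    (forall v, S_U1U1 v -> S_U2V1 (f v)) /\
    (forall v, S_U1U1 v -> filterlim f (within S_U1U1 (locally v)) (locally (f v))) /\
    (forall (g : Gamma2) v, in_Gamma2 g -> S_U1U1 v ->
        f (act_U1U1 g v) = act_U2V1 g (f v)).
Proof.
  exists fold_map; split; [|split].
  - exact fold_map_sphere.
  - intros v _.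
    eapply filterlim_filter_le_1; [apply filter_le_within | apply fold_map_continuous].
  - intros g v Hg _; now apply fold_map_equivariant.
Qed.
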